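(* Let $L=E\cup F\Sigma^*$, where $E,F\subseteq\Sigma^*$ are finite, be a reverse definite language with state complexity $n\ge 1$. Then $\sigma(L)\le (n-1)!$, and this bound is tight (for every $n\ge1$ there is a reverse definite language with state complexity $n$ and syntactic complexity $(n-1)!$). Moreover, if $L$ achieves this upper bound, i.e. $\sigma(L)=(n-1)!$, and $n\ge 4$, then $|\Sigma|\ge (n-1)!-2(n-2)!$, and this bound is tight (for every $n\ge 4$ there is a reverse definite language over an alphabet of size exactly $(n-1)!-2(n-2)!$ with state complexity $n$ and syntactic complexity $(n-1)!$).
   Context: $\Sigma$ is a finite non-empty alphabet. A language $L\subseteq\Sigma^*$ is reverse definite if $L=E\cup F\Sigma^*$ for some finite languages $E,F\subseteq\Sigma^*$. The state complexity of a regular language is the number of states of its minimal deterministic finite automaton (DFA). The syntactic congruence of $L$ is $x\approx_L y$ iff for all $u,v\in\Sigma^*$, $uxv\in L\Leftrightarrow uyv\in L$; the syntactic semigroup is $\Sigma^+/\approx_L$, and the syntactic complexity $\sigma(L)$ is its cardinality (equivalently, the number of distinct transformations of the states of the minimal DFA of $L$ induced by non-empty words). *)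

From mathcomp Require Import all_boot.
Set Implicit Arguments. Unset Strict Implicit. Unset Printing Implicit Defensive.

Definition lang (S : finType) := seq S -> bool.

Definition reverse_definite (S : finType) (L : lang S) : Prop :=
  exists (E F : seq (seq S)),
    forall w, L w = (w \in E) || has (fun f => prefix f w) F.

Definition nerode (S : finType) (L : lang S) (x y : seq S) : Prop :=
  forall w, L (x ++ w) = L (y ++ w).

(* State complexity of L is n: the Nerode relation has exactly n classes
   (= number of states of the minimal complete DFA of L). *)
Definition state_complexity (S : finType) (L : lang S) (n : nat) : Prop :=
  exists q : seq S -> 'I_n,
    (forall x y, q x = q y <-> nerode L x y) /\
    (forall i : 'I_n, exists x, q x = i).

Definition syntactic_eq (S : finType) (L : lang S) (x y : seq S) : Prop :=
  forall u v, L (u ++ x ++ v) = L (u ++ y ++ v).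

(* Syntactic complexity of L is m: the syntactic semigroup
   (non-empty words modulo the syntactic congruence) has exactly m elements. *)
Definition syntactic_complexity (S : finType) (L : lang S) (m : nat) : Prop :=
  exists s : seq S -> 'I_m,
    (forall x y, x != [::] -> y != [::] -> (s x = s y <-> syntactic_eq L x y)) /\
    (forall i : 'I_m, exists x, x != [::] /\ s x = i).

From mathcomp Require Import all_boot zify boolp.
Set Implicit Arguments. Unset Strict Implicit. Unset Printing Implicit Defensive.

(* The syntactic semigroup of L is the semigroup of transformations of the
   minimal DFA induced by nonempty words.  For a reverse definite language every
   long word leads into a sink (a state fixed by all words), every state lying on
   a cycle is a sink, and there are at most two sinks, the accepting and the
   rejecting one.  So reachability orders the transient states, and every
   transformation maps a transient state strictly into its set of successors;
   choosing the images from a minimal transient state upwards leaves at most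
   (n-1)! transformations.  For words of length at least two, a minimal
   transient state has at most two possible images and every other one loses a
   choice, so they induce at most 2(n-2)! transformations and the letters must
   supply the others.  Both bounds are attained by automata whose letters move
   each transient state strictly upwards: all such maps, or only those moving
   some state i to i+1, which generate the remaining ones in two steps. *)

Lemma card_family_prod (T rT : finType) (F : T -> pred rT) :
  #|family F| = \prod_(x : T) #|F x|.
Proof. by rewrite card_family foldrE big_map big_enum. Qed.

Lemma card_family_fixed (T : finType) (P : pred T) (A : T -> {set T}) :
  #|family (fun i => [pred j | if P i then j == i else j \in A i])| =
  \prod_(i in [set i | ~~ P i]) #|A i|.
Proof.
rewrite card_family_prod [RHS]big_mkcond; apply: eq_bigr => i _.
rewrite in_set; case: (P i).
  by rewrite -(card1 i); apply: eq_card => j; rewrite !inE.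
by apply: eq_card => j; rewrite !inE.
Qed.

Lemma card_disjoint_leq (T : finType) (A B : {set T}) :
  A :&: B = set0 -> #|A| + #|B| <= #|T|.
Proof. by move=> AB; rewrite -cardsUI AB cards0 addn0 max_card. Qed.

Lemma ffact_leq_fact N k : k <= N -> N ^_ k <= N`!.
Proof. by move=> kN; rewrite -(ffact_fact kN) leq_pmulr // fact_gt0. Qed.

(* Induction on #|B|: the hypothesis bounds one factor by N.+1 - #|B|. *)
Lemma prod_leq_ffact (T : finType) (f : T -> nat) (N : nat) (B : {set T}) :
  (forall B' : {set T}, B' \subset B -> B' != set0 ->
     exists2 i, i \in B' & f i + #|B'| <= N.+1) ->
  \prod_(i in B) f i <= N ^_ #|B|.
Proof.
move: {2}#|B| (erefl #|B|) => k; elim: k B => [|k IH] B cardB minB.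
  by move/eqP: cardB; rewrite cards_eq0 => /eqP ->; rewrite big_set0 cards0.
have B0 : B != set0 by rewrite -card_gt0 cardB.
have [i iB fi] := minB B (subxx _) B0.
rewrite (big_setD1 i iB) cardB ffactnSr mulnC leq_mul //.
  by move: fi; rewrite cardB; lia.
have cardBi : #|B :\ i| = k by move: cardB; rewrite (cardsD1 i) iB => -[].
rewrite -cardBi; apply: IH => // B' sB' B'0.
by apply: minB => //; apply: subset_trans sB' (subsetDl _ _).
Qed.

Lemma surj_section (T : choiceType) (U : Type) (f : T -> U) :
  (forall u, exists x, f x = u) -> exists g : U -> T, cancel g f.
Proof.
move=> fS; exists (fun u => projT1 (cid (fS u))) => u.
exact: projT2 (cid (fS u)).
Qed.

Section TransitionSemigroup.

Variables (S : finType) (L : lang S) (n : nat).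
Variables (q : seq S -> 'I_n) (rep : 'I_n -> seq S).
Hypotheses (qN : forall x y, q x = q y <-> nerode L x y) (repK : cancel rep q).

Definition delta (x : seq S) : {ffun 'I_n -> 'I_n} := [ffun i => q (rep i ++ x)].

Lemma q_catr x y z : q x = q y -> q (x ++ z) = q (y ++ z).
Proof. by move=> /qN xy; apply/qN => w; rewrite -!catA xy. Qed.

Lemma q_cat u x : q (u ++ x) = delta x (q u).
Proof. by rewrite ffunE; apply: q_catr; rewrite repK. Qed.

Lemma delta_nil i : delta [::] i = i.
Proof. by rewrite ffunE cats0 repK. Qed.

Lemma delta_cat x y i : delta (x ++ y) i = delta y (delta x i).
Proof. by rewrite [delta x i]ffunE -q_cat ffunE catA. Qed.

Lemma syntactic_eq_delta x y : syntactic_eq L x y <-> delta x = delta y.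
Proof.
split=> [xy | /ffunP xy u v].
  by apply/ffunP => i; rewrite !ffunE; apply/qN => w; rewrite -!catA xy.
have /qN/(_ v) : q (u ++ x) = q (u ++ y) by rewrite !q_cat xy.
by rewrite -!catA.
Qed.

Definition transitions : {set {ffun 'I_n -> 'I_n}} :=
  [set t | `[< exists2 x, x != [::] & delta x = t >]].

Lemma transitionsP t :
  reflect (exists2 x, x != [::] & delta x = t) (t \in transitions).
Proof. by rewrite inE; apply: asboolP. Qed.

Lemma syntactic_complexity_transitions :
  0 < #|S| -> syntactic_complexity L #|transitions|.
Proof.
move=> /card_gt0P [a _].
have delta_in x : x != [::] -> delta x \in transitions.
  by move=> x0; apply/transitionsP; exists x.
have a_in := delta_in [:: a] isT.
exists (fun x => enum_rank_in a_in (delta x)); split.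
  move=> x y x0 y0; rewrite syntactic_eq_delta; split=> [|-> //].
  by apply: enum_rank_in_inj; apply: delta_in.
move=> i; have /transitionsP [x x0 ex] := enum_valP i.
by exists x; split => //; rewrite ex enum_valK_in.
Qed.

Definition sink i := `[< forall w, delta w i = i >].

Local Notation sinks := [set i | sink i].
Local Notation transients := [set i | ~~ sink i].

Lemma sink_fixed w i : sink i -> delta w i = i.
Proof. by move/asboolP. Qed.

(* A sink is determined by whether it is accepting. *)
Lemma card_sinks : #|sinks| <= 2.
Proof.
have sinkL i w : sink i -> L (rep i ++ w) = L (rep i).
  move=> /(sink_fixed w); rewrite ffunE -{2}(repK i) => /qN/(_ [::]).
  by rewrite !cats0.
have inj : {in sinks &, injective (fun i => L (rep i))}.
  move=> i j; rewrite !inE => si sj e.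
  by rewrite -(repK i) -(repK j); apply/qN => w; rewrite !sinkL // e.
rewrite -(card_in_imset inj).
by apply: leq_trans (max_card _) _; rewrite card_bool.
Qed.

Lemma card_transients_sinks : #|transients| + #|sinks| = n.
Proof.
rewrite -[RHS](card_ord n) -(cardsC transients); congr (_ + _).
by apply: eq_card => i; rewrite !inE negbK.
Qed.

Definition succs i : {set 'I_n} :=
  [set j | `[< exists2 x, x != [::] & delta x i = j >] && (j != i)].

Lemma succs_irr i : i \notin succs i.
Proof. by rewrite inE eqxx andbF. Qed.

Variable K : nat.
Hypothesis long_stable : forall x, K <= size x -> forall w, L (x ++ w) = L x.

Lemma sink_delta_long x i : K <= size x -> sink (delta x i).
Proof.
move=> Kx; apply/asboolP => w.
rewrite -delta_cat !ffunE; apply/qN => v.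
have Kix : K <= size (rep i ++ x) by rewrite size_cat (leq_trans Kx) ?leq_addl.
by rewrite -!catA !(catA (rep i) x) !(long_stable Kix).
Qed.

Lemma sink_of_loop x i : x != [::] -> delta x i = i -> sink i.
Proof.
move=> x0 xi.
have iter k : delta (flatten (nseq k x)) i = i.
  by elim: k => [|k IH] /=; rewrite ?delta_nil // delta_cat xi IH.
have size_iter k : size (flatten (nseq k x)) = k * size x.
  by elim: k => //= k IH; rewrite size_cat IH mulSn.
rewrite -(iter K); apply: sink_delta_long.
by rewrite size_iter; case: (x) x0 => // a x' _; rewrite leq_pmulr.
Qed.

Lemma delta_in_succs x i : ~~ sink i -> x != [::] -> delta x i \in succs i.
Proof.
move=> si x0; rewrite inE; apply/andP; split; first by apply/asboolP; exists x.
by apply: contra si => /eqP; apply: sink_of_loop.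
Qed.

Lemma succs_sub i j : ~~ sink i -> j \in succs i -> succs j \subset succs i.
Proof.
move=> si; rewrite inE => /andP [/asboolP [x x0 <-] _].
apply/subsetP => k; rewrite inE => /andP [/asboolP [y y0 <-] _].
by rewrite -delta_cat delta_in_succs //; case: (x) x0.
Qed.

Lemma card_succs_lt i j : ~~ sink i -> j \in succs i -> #|succs j| < #|succs i|.
Proof.
move=> si ji; apply/proper_card/properP; split; first exact: succs_sub.
by exists j => //; apply: succs_irr.
Qed.

Lemma card_transients_lt : 0 < #|S| -> 'I_n -> #|transients| < n.
Proof.
move=> /card_gt0P [a _] i.
have sa : sink (delta (nseq K a) i) by apply: sink_delta_long; rewrite size_nseq.
rewrite -[X in _ < X]card_transients_sinks -addn1 leq_add2l card_gt0.
by apply/set0Pn; exists (delta (nseq K a) i); rewrite inE.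
Qed.

Lemma exists_minimal (B : {set 'I_n}) : B \subset transients -> B != set0 ->
  exists2 i, i \in B & succs i :&: B = set0.
Proof.
move=> sB /set0Pn [i0 i0B].
have [i iB imin] := arg_minnP (fun i => #|succs i|) i0B.
exists i => //; apply/setP => j; rewrite in_setI in_set0; apply/negP => /andP [ji jB].
have si : ~~ sink i by have := subsetP sB i iB; rewrite inE.
by have := card_succs_lt si ji; rewrite ltnNge imin.
Qed.

Lemma transitions_sub_family :
  transitions \subset family (fun i => [pred j | if sink i then j == i else j \in succs i]).
Proof.
apply/subsetP => _ /transitionsP [x x0 <-]; apply/familyP => i; rewrite inE.
case: ifP => [si | /negbT si]; first by rewrite sink_fixed.
exact: delta_in_succs.
Qed.

Lemma card_transitions_leq : 0 < #|S| -> 0 < n -> #|transitions| <= (n.-1)`!.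
Proof.
move=> S0 n0.
apply: leq_trans (subset_leq_card transitions_sub_family) _.
rewrite card_family_fixed.
have transients_lt := card_transients_lt S0 (Ordinal n0).
apply: leq_trans (ffact_leq_fact (_ : #|transients| <= n.-1)); last by rewrite -ltnS prednK.
apply: prod_leq_ffact => B sB B0; have [i iB iB0] := exists_minimal sB B0.
by exists i; rewrite // prednK //; have := card_disjoint_leq iB0; rewrite card_ord.
Qed.

(* The states reached from i by a word of length at least two lie in succs2 i. *)
Definition succs2 i : {set 'I_n} :=
  [set k in succs i | sink k || [exists j in succs i, ~~ sink j && (k \in succs j)]].

Definition transitions2 : {set {ffun 'I_n -> 'I_n}} :=
  [set t | `[< exists2 x, 1 < size x & delta x = t >]].

Lemma transitions_sub_letters :
  transitions \subset [set delta [:: a] | a : S] :|: transitions2.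
Proof.
apply/subsetP => t /transitionsP [[|a [|b x]] // _ <-]; rewrite in_setU.
  by rewrite imset_f.
by apply/orP; right; rewrite inE; apply/asboolP; exists [:: a, b & x].
Qed.

Lemma transitions2_sub_family :
  transitions2 \subset family (fun i => [pred j | if sink i then j == i else j \in succs2 i]).
Proof.
apply/subsetP => t; rewrite inE => /asboolP [[|a [|b y]] // _ <-].
apply/familyP => i; rewrite inE.
case: ifP => [si | /negbT si]; first by rewrite sink_fixed.
rewrite -cat1s delta_cat; set j := delta [:: a] i.
have ji : j \in succs i by apply: delta_in_succs.
rewrite inE; have [sj | nsj] := boolP (sink j); first by rewrite sink_fixed // ji sj.
have kj : delta (b :: y) j \in succs j by apply: delta_in_succs.
rewrite (subsetP (succs_sub si ji)) //=; apply/orP; right.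
by apply/existsP; exists j; rewrite ji nsj kj.
Qed.

Lemma succs2_sub i : succs2 i \subset succs i.
Proof. by apply/subsetP => k; rewrite inE => /andP []. Qed.

(* A transient successor of i with the most successors is missing from succs2 i. *)
Lemma card_succs2 i : ~~ sink i ->
  (#|succs2 i| < #|succs i|) || (succs2 i \subset sinks).
Proof.
move=> si; have [/existsP [k /andP [ki sk]] | ] := boolP [exists k in succs i, ~~ sink k].
  have kin : k \in [set j in succs i | ~~ sink j] by rewrite inE ki sk.
  have [k0 k0in k0max] := arg_maxnP (fun j => #|succs j|) kin.
  have : k0 \in [set j in succs i | ~~ sink j] := k0in.
  rewrite inE => /andP [k0i sk0].
  apply/orP; left; apply/proper_card/properP; split; first exact: succs2_sub.
  exists k0 => //; rewrite inE k0i (negbTE sk0) /=.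
  apply/negP => /existsP [j /and3P [ji sj k0j]].
  have := card_succs_lt sj k0j; rewrite ltnNge => /negP; apply.
  have jin : j \in [set j in succs i | ~~ sink j] by rewrite inE ji sj.
  exact: k0max jin.
rewrite negb_exists => /forallP transient_free; apply/orP; right.
apply/subsetP => k /(subsetP (succs2_sub i)) ki; rewrite inE.
by have := transient_free k; rewrite ki negbK.
Qed.

Lemma card_transitions2_leq : 0 < #|S| -> 1 < n -> #|transitions2| <= 2 * (n.-2)`!.
Proof.
move=> S0 n1.
apply: leq_trans (subset_leq_card transitions2_sub_family) _.
rewrite card_family_fixed.
have [-> | transients0] := eqVneq transients set0.
  by rewrite big_set0 muln_gt0 fact_gt0.
have [i0 i0t i0min] := exists_minimal (subxx _) transients0.
have transients_lt := card_transients_lt S0 i0.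
have card_transientsD1 : #|transients :\ i0| = #|transients|.-1.
  by rewrite [in RHS](cardsD1 i0) i0t.
rewrite (big_setD1 i0 i0t) leq_mul //.
  apply: leq_trans card_sinks; apply/subset_leq_card/(subset_trans (succs2_sub _)).
  apply/subsetP => j ji0; rewrite inE; apply/negPn/negP => sj.
  by have := in_set0 j; rewrite -i0min inE ji0 inE sj.
apply: leq_trans (ffact_leq_fact (_ : #|transients :\ i0| <= n.-2)); last first.
  by rewrite card_transientsD1; lia.
apply: prod_leq_ffact => B sB B0.
have sBt : B \subset transients by apply: subset_trans sB (subsetDl _ _).
have [i iB iB0] := exists_minimal sBt B0.
exists i => //.
have succsB : #|succs i| + #|B| <= n := leq_trans (card_disjoint_leq iB0) (eq_leq (card_ord n)).
have cardB : #|B| <= #|transients|.-1 by rewrite -card_transientsD1 subset_leq_card.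
have si : ~~ sink i by have := subsetP sBt i iB; rewrite inE.
have := card_transients_sinks; have : 0 < #|transients| by apply/card_gt0P; exists i0.
have : (#|succs2 i| < #|succs i|) || (#|succs2 i| <= #|sinks|).
  by case/orP: (card_succs2 si) => [-> // | /subset_leq_card ->]; rewrite orbT.
(* Naming the cardinals lets lia identify their different coercion forms. *)
move: succsB cardB.
set s2 := #|succs2 i|; set s1 := #|succs i|; set b := #|B|; set t := #|transients|.
move=> succsB cardB /orP []; lia.
Qed.

End TransitionSemigroup.

Lemma reverse_definite_long (S : finType) (L : lang S) :
  reverse_definite L -> exists K, forall x, K <= size x -> forall w, L (x ++ w) = L x.
Proof.
move=> [E [F LEF]]; exists (\max_(s <- E ++ F) size s).+1 => x Kx w.
have short s : s \in E ++ F -> size s < size x.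
  by move=> sEF; apply: leq_ltn_trans Kx; apply: leq_bigmax_seq.
have notin_E y : size x <= size y -> (y \in E) = false.
  by move=> xy; apply: contraTF xy => yE; rewrite -ltnNge short // mem_cat yE.
rewrite !LEF notin_E ?size_cat ?leq_addr // notin_E //=.
apply: eq_in_has => f fF.
have fx : size f <= size x by rewrite ltnW // short // mem_cat fF orbT.
by rewrite !prefixE takel_cat.
Qed.

Lemma syntactic_complexity_unique (S : finType) (L : lang S) m m' :
  syntactic_complexity L m -> syntactic_complexity L m' -> m = m'.
Proof.
suff le_sc k k' : syntactic_complexity L k -> syntactic_complexity L k' -> k <= k'.
  by move=> sc sc'; apply/eqP; rewrite eqn_leq !le_sc.
move=> [s [sP sS]] [s' [s'P _]].
have ch i : exists x, (x != [::]) && (s x == i).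
  by have [x [x0 xi]] := sS i; exists x; rewrite x0 xi eqxx.
pose f i := s' (xchoose (ch i)).
suff /leq_card : injective f by rewrite !card_ord.
move=> i j; rewrite /f => e.
have /andP [i0 /eqP <-] := xchooseP (ch i).
have /andP [j0 /eqP <-] := xchooseP (ch j).
by apply/sP => //; apply/s'P.
Qed.

Lemma syntactic_complexity_leq_fact (S : finType) (L : lang S) n :
  0 < #|S| -> reverse_definite L -> 1 <= n -> state_complexity L n ->
  exists m, syntactic_complexity L m /\ m <= (n.-1)`!.
Proof.
move=> S0 /reverse_definite_long [K long] n0 [q [qN /surj_section [rep repK]]].
exists #|transitions q rep|; split; first exact: syntactic_complexity_transitions qN repK S0.
exact: (card_transitions_leq qN repK long S0 n0).
Qed.

Lemma card_alphabet_geq (S : finType) (L : lang S) n :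
  0 < #|S| -> reverse_definite L -> 4 <= n -> state_complexity L n ->
  syntactic_complexity L (n.-1)`! -> (n.-1)`! - 2 * (n.-2)`! <= #|S|.
Proof.
move=> S0 /reverse_definite_long [K long] n4 [q [qN /surj_section [rep repK]]] scL.
have <- : #|transitions q rep| = (n.-1)`!.
  exact: syntactic_complexity_unique (syntactic_complexity_transitions qN repK S0) scL.
rewrite leq_subLR; apply: leq_trans (subset_leq_card (transitions_sub_letters q rep)) _.
apply: leq_trans (leq_of_leqif (leq_card_setU _ _)) _.
rewrite addnC leq_add ?leq_imset_card //.
by apply: (card_transitions2_leq qN repK long S0); lia.
Qed.

Lemma reverse_definite_of_take (S : finType) (L : lang S) K :
  (forall w, K <= size w -> L w = L (take K w)) -> reverse_definite L.
Proof.
move=> LK.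
pose words k : seq (seq S) := [seq tval t | t <- enum {: k.-tuple S}].
have wordsP k w : (w \in words k) = (size w == k).
  apply/mapP/eqP => [[t _ ->] | wk]; first by rewrite size_tuple.
  by exists (Tuple (introT eqP wk)); rewrite ?mem_enum.
have shortP w : (w \in flatten [seq words k | k <- iota 0 K]) = (size w < K).
  apply/flatten_mapP/idP => [[k] | wK]; last by exists (size w); rewrite ?mem_iota ?wordsP.
  by rewrite mem_iota wordsP => /andP [_ kK] /eqP ->.
exists [seq w <- flatten [seq words k | k <- iota 0 K] | L w].
exists [seq w <- words K | L w] => w.
rewrite mem_filter shortP; case: ltnP => Kw.
  rewrite andbT; case: hasP => [[f] | _]; last by rewrite orbF.
  rewrite mem_filter wordsP => /andP [_ /eqP fK] /size_prefix.
  by rewrite fK leqNgt Kw.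
rewrite andbF /= LK //; apply/idP/hasP => [Lw | [f]].
  exists (take K w); last exact: prefix_take.
  by rewrite mem_filter wordsP size_takel // eqxx andbT.
by rewrite mem_filter wordsP prefixE => /andP [Lf /eqP ->] /eqP ->.
Qed.

Lemma dfa_nerode (S : finType) n (d : 'I_n -> S -> 'I_n) (i0 : 'I_n) (acc : pred 'I_n) :
  (forall i j, (forall w, acc (foldl d i w) = acc (foldl d j w)) -> i = j) ->
  forall x y, foldl d i0 x = foldl d i0 y <-> nerode (fun w => acc (foldl d i0 w)) x y.
Proof.
move=> separate x y; split=> [xy w | xy]; first by rewrite /= !foldl_cat xy.
by apply: separate => w; have := xy w; rewrite /= !foldl_cat.
Qed.

Lemma card_ord_gt N k : k < N -> #|[pred j : 'I_N | k < j]| = N - k.+1.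
Proof.
move=> kN; rewrite -sum1_card (big_mkcond (fun j : 'I_N => k < j)) /=.
rewrite -(big_mkord xpredT (fun j => if k < j then 1 else 0)).
rewrite (big_cat_nat (n := k.+1)) //= big_nat_cond big1; last first.
  by move=> i /andP [/andP [_ ik] _]; rewrite ltnNge -ltnS ik.
rewrite add0n big_nat_cond (eq_bigr (fun _ => 1)); last first.
  by move=> i /andP [/andP [ki _] _]; rewrite ki.
by rewrite -big_nat_cond sum_nat_const_nat muln1.
Qed.

Section Ascending.

Variable m : nat.
Local Notation transf := {ffun 'I_(m.+3) -> 'I_(m.+3)}.

(* States m.+1 (rejecting) and m.+2 = ord_max (accepting) are sinks; the other
   states are moved strictly upwards. *)
Definition ascending : {set transf} :=
  [set t : transf | [forall i : 'I_(m.+3), if i <= m then i < t i else t i == i]].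

Lemma ascendingP (t : transf) :
  reflect (forall i : 'I_(m.+3), if i <= m then i < t i else t i == i) (t \in ascending).
Proof. by rewrite inE; apply: forallP. Qed.

Lemma ascending_fix (t : transf) (i : 'I_(m.+3)) : t \in ascending -> m < i -> t i = i.
Proof. by move=> /ascendingP /(_ i); rewrite leqNgt => /[swap] ->; move/eqP. Qed.

Lemma ascending_lt (t : transf) (i : 'I_(m.+3)) : t \in ascending -> i <= m -> i < t i.
Proof. by move=> /ascendingP /(_ i) /[swap] ->. Qed.

Lemma ascending_le (t : transf) (i : 'I_(m.+3)) : t \in ascending -> i <= t i.
Proof.
move=> tA; case: (leqP i m) => im; first exact: ltnW (ascending_lt tA im).
by rewrite ascending_fix.
Qed.

Lemma ascending_comp (t1 t2 : transf) :
  t1 \in ascending -> t2 \in ascending -> [ffun i => t2 (t1 i)] \in ascending.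
Proof.
move=> t1A t2A; apply/ascendingP => i; rewrite ffunE; case: ifP => im.
  exact: leq_trans (ascending_lt t1A im) (ascending_le _ t2A).
by rewrite !ascending_fix // ltnNge im.
Qed.

Lemma card_ascending_family (lo : nat -> nat) : (forall i, i <= m -> lo i < m.+3) ->
  #|family (fun i : 'I_(m.+3) => [pred j : 'I_(m.+3) | if i <= m then lo i < j else j == i])| =
  \prod_(i < m.+1) (m.+2 - lo i).
Proof.
move=> lo_lt; rewrite card_family_prod.
rewrite (eq_bigr (fun i : 'I_(m.+3) => if i <= m then m.+2 - lo i else 1)); last first.
  move=> i _; case: ifP => im.
    by rewrite (eq_card (B := [pred j : 'I_(m.+3) | lo i < j])) // card_ord_gt ?lo_lt.
  by rewrite -(card1 i); apply: eq_card => j; rewrite !inE.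
rewrite 2!big_ord_recr /= ltnn (_ : m.+1 < m = false) ?muln1; last by lia.
by apply: eq_bigr => i _; rewrite -ltnS ltn_ord.
Qed.

Lemma card_ascending : #|ascending| = (m.+2)`!.
Proof.
have -> : #|ascending| = #|family (fun i : 'I_(m.+3) =>
    [pred j : 'I_(m.+3) | if i <= m then i < j else j == i])|.
  by apply: eq_card => t; apply/ascendingP/familyP => h i; have := h i; rewrite inE.
rewrite (card_ascending_family (lo := id)); last by move=> i; lia.
by rewrite -ffact_prod -(ffact_fact (leqnSn m.+1)) subSnn muln1.
Qed.

Definition jumping : {set transf} :=
  [set t in ascending | [forall i : 'I_(m.+3), (i < m) ==> (t i != i.+1 :> nat)]].

Lemma jumping_sub : jumping \subset ascending.
Proof. by apply/subsetP => t; rewrite inE => /andP []. Qed.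

Lemma card_jumping : #|jumping| = 2 * (m.+1)`!.
Proof.
have -> : #|jumping| = #|family (fun i : 'I_(m.+3) =>
    [pred j : 'I_(m.+3) | if i <= m then (if i < m then i.+1 else i) < j else j == i])|.
  apply: eq_card => t; rewrite inE; apply/andP/familyP => [[/ascendingP tA /forallP tJ] i | tF].
    have := tA i; have := tJ i; rewrite inE.
    by case: (ltnP i m) => //= im; rewrite (ltnW im) => ?; lia.
  split; [apply/ascendingP | apply/forallP] => i; have := tF i; rewrite inE.
    by case: (ltnP i m) => //= im; rewrite (ltnW im); lia.
  by case: (ltnP i m) => //= im; rewrite (ltnW im); lia.
rewrite (card_ascending_family (lo := fun i => if i < m then i.+1 else i)); last first.
  by move=> i im; case: ifP; lia.
rewrite big_ord_recr /= ltnn (eq_bigr (fun i : 'I_m => m.+1 - i)) => [|i _]; last first.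
  by rewrite ltn_ord subSS.
rewrite -ffact_prod -(ffact_fact (leqnSn m)) subSnn muln1 mulnC.
by congr (_ * _); lia.
Qed.

Lemma nonjumping0 t : 0 < m -> t \in ascending -> val (t ord0) = 1 ->
  t \in ascending :\: jumping.
Proof.
move=> m0 tA t01; rewrite in_setD tA andbT in_set tA /= negb_forall.
by apply/existsP; exists ord0; rewrite m0 t01.
Qed.

Lemma jumping_gt p (i : 'I_(m.+3)) : p \in jumping -> i < m -> i.+1 < p i.
Proof.
move=> /[dup] /(subsetP jumping_sub) pA; rewrite inE => /andP [_ /forallP /(_ i)].
move=> pJ im; move: pJ; rewrite im /= => pi.
by rewrite ltn_neqAle eq_sym pi (ascending_lt pA (ltnW im)).
Qed.

(* A jumping map p factors as shift_down p \o shift_up p. *)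
Definition shift_up (p : transf) : transf :=
  [ffun i : 'I_(m.+3) => if i < m then inord i.+1 else p i].

Definition shift_down (p : transf) : transf :=
  [ffun j : 'I_(m.+3) => if j == ord0 then inord 1 else if j <= m then p (inord j.-1) else j].

Lemma shift_up_lt p (i : 'I_(m.+3)) : i < m -> shift_up p i = i.+1 :> nat.
Proof. by move=> im; rewrite ffunE im /= inordK //; lia. Qed.

Lemma shift_up_nonjumping p : 0 < m -> p \in ascending -> shift_up p \in ascending :\: jumping.
Proof.
move=> m0 pA; apply: nonjumping0 => //; last exact: shift_up_lt.
apply/ascendingP => i; case: (ltnP i m) => im; first by rewrite shift_up_lt // ltnW.
rewrite ffunE (ltnNge i m) im /=; case: (leqP i m) => im'; first exact: ascending_lt.
by rewrite ascending_fix.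
Qed.

Lemma shift_down_nonjumping p : 0 < m -> p \in jumping -> shift_down p \in ascending :\: jumping.
Proof.
move=> m0 pJ; apply: nonjumping0 => //; last by rewrite ffunE eqxx /= inordK.
apply/ascendingP => j; rewrite ffunE; case: eqP => [-> | j0]; first by rewrite inordK.
case: (leqP j m) => jm //.
have j_gt0 : 0 < j by case: (posnP j) => // j_0; case: j0; apply: val_inj.
have := @jumping_gt p (inord j.-1) pJ; rewrite inordK ?prednK; [apply | ..]; lia.
Qed.

Lemma shift_downK p i : p \in jumping -> shift_down p (shift_up p i) = p i.
Proof.
move=> pJ; have pA := subsetP jumping_sub p pJ.
rewrite [shift_down p _]ffunE; case: (ltnP i m) => im.
  rewrite -(inj_eq val_inj) /= shift_up_lt // im.
  by congr (p _); apply: ord_inj; rewrite inordK //; lia.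
have mp : m < p i.
  case: (leqP i m) => im'; first exact: leq_ltn_trans im (ascending_lt pA im').
  by rewrite ascending_fix.
have -> : shift_up p i = p i by rewrite ffunE ltnNge im.
have -> : (p i == ord0) = false.
  by apply/negbTE; rewrite -(inj_eq val_inj) /= -lt0n (leq_ltn_trans _ mp).
by rewrite leqNgt mp.
Qed.

Definition probe (i : 'I_(m.+3)) : transf :=
  [ffun k : 'I_(m.+3) => if k <= m then (if k == i then ord_max else inord m.+1) else k].

Lemma probe_ascending i : probe i \in ascending.
Proof.
apply/ascendingP => k; rewrite ffunE; case: (leqP k m) => km //.
by case: (k == i); rewrite /= ?inordK; lia.
Qed.

Lemma probe_max i k :
  (probe i k == ord_max) = if k <= m then k == i else k == ord_max.
Proof.
rewrite ffunE; case: (k <= m) => //; case: (k == i); rewrite ?eqxx //.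
by rewrite -(inj_eq val_inj) /= inordK //; lia.
Qed.

Section Letters.

Variable A : {set transf}.
Hypothesis A_ascending : A \subset ascending.

Local Notation letter := {t : transf | t \in A}.

Definition run (i : 'I_(m.+3)) (w : seq letter) := foldl (fun j (a : letter) => val a j) i w.

Definition top_lang : lang letter := fun w => run ord0 w == ord_max.

Lemma run_cat i (x y : seq letter) : run i (x ++ y) = run (run i x) y.
Proof. exact: foldl_cat. Qed.

Lemma letter_ascending (a : letter) : val a \in ascending.
Proof. exact: subsetP A_ascending _ (valP a). Qed.

Lemma run_ascending (x : seq letter) : x != [::] -> [ffun i => run i x] \in ascending.
Proof.
elim/last_ind: x => // x a IH _; case: x IH => [|b x] IH.
  by rewrite (_ : [ffun i => _] = val a) ?letter_ascending //; apply/ffunP => i; rewrite ffunE.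
rewrite (_ : [ffun i => _] = [ffun i => val a ([ffun i => run i (b :: x)] i)]).
  by apply: ascending_comp; [apply: IH | apply: letter_ascending].
by apply/ffunP => i; rewrite !ffunE -cats1 run_cat.
Qed.

Lemma run_fix (w : seq letter) (i : 'I_(m.+3)) : m < i -> run i w = i.
Proof.
elim: w i => // a w IH i mi /=.
by rewrite -/(run _ w) ascending_fix ?IH // letter_ascending.
Qed.

Lemma run_gt (w : seq letter) (i : 'I_(m.+3)) : m < i + size w -> m < run i w.
Proof.
elim: w i => [|a w IH] i; first by rewrite addn0.
rewrite /= -/(run _ w) => mw; apply: IH.
case: (leqP i m) => im; last by rewrite ascending_fix ?letter_ascending ?ltn_addr.
by have := ascending_lt (letter_ascending a) im; move: mw => /=; lia.
Qed.

Lemma reverse_definite_top_lang : reverse_definite top_lang.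
Proof.
apply: (reverse_definite_of_take (K := m.+1)) => w mw.
rewrite /top_lang -{1}(cat_take_drop m.+1 w) run_cat run_fix //.
by apply: run_gt; rewrite add0n size_takel.
Qed.

Hypothesis A_gen :
  forall p, p \in ascending -> exists2 w : seq letter, w != [::] & forall i, run i w = p i.

Lemma card_letter_gt0 : 0 < #|{: letter}|.
Proof.
have /card_gt0P [p pA] : 0 < #|ascending| by rewrite card_ascending fact_gt0.
by have [[|a w] // _ _] := A_gen pA; apply/card_gt0P; exists a.
Qed.

Lemma run_reach (i : 'I_(m.+3)) : exists w, run ord0 w = i.
Proof.
case: (posnP i) => i0; first by exists [::]; apply: val_inj; rewrite /= i0.
pose p := [ffun j : 'I_(m.+3) => if j <= m then (if j < i then i else ord_max) else j].
have pA : p \in ascending.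
  apply/ascendingP => j; rewrite ffunE; case: (leqP j m) => jm //.
  by case: (ltnP j i) => ji /=; lia.
by have [w _ wp] := A_gen pA; exists w; rewrite wp ffunE /= i0.
Qed.

Lemma run_separate (i j : 'I_(m.+3)) :
  (forall w, (run i w == ord_max) = (run j w == ord_max)) -> i = j.
Proof.
move=> ij; have run_probe k : exists w, forall l, run l w = probe k l.
  by have [w _ wk] := A_gen (probe_ascending k); exists w.
have [wi wiP] := run_probe i; have [wj wjP] := run_probe j.
have := ij wi; have := ij wj; have := ij [::]; rewrite !wiP !wjP !probe_max !eqxx /=.
case: (leqP i m) => im; case: (leqP j m) => jm.
- by move=> _ /eqP.
- by move=> _ i_j /esym jmax; apply/eqP; rewrite i_j.
- by move=> _ -> /esym/eqP ->.
rewrite -!(inj_eq val_inj) /= => ij0 _ _; apply: ord_inj.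
by move: ij0; have := ltn_ord i; have := ltn_ord j; lia.
Qed.

Lemma nerode_top_lang x y : run ord0 x = run ord0 y <-> nerode top_lang x y.
Proof.
exact: (@dfa_nerode _ _ (fun j (a : letter) => val a j) ord0 (fun j => j == ord_max) run_separate).
Qed.

Lemma state_complexity_top_lang : state_complexity top_lang m.+3.
Proof. by exists (run ord0); split; [exact: nerode_top_lang | exact: run_reach]. Qed.

Lemma syntactic_complexity_top_lang : syntactic_complexity top_lang (m.+2)`!.
Proof.
have [rep repK] := surj_section run_reach.
have delta_run x i : delta (run ord0) rep x i = run i x by rewrite ffunE run_cat repK.
have -> : (m.+2)`! = #|transitions (run ord0) rep|.
  rewrite -card_ascending; apply: eq_card => t.
  apply/idP/transitionsP => [tA | [x x0 <-]]; last first.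
    rewrite (_ : delta _ _ x = [ffun i => run i x]); first exact: run_ascending.
    by apply/ffunP => i; rewrite delta_run ffunE.
  have [w w0 wt] := A_gen tA; exists w => //.
  by apply/ffunP => i; rewrite delta_run wt.
exact: (syntactic_complexity_transitions nerode_top_lang repK card_letter_gt0).
Qed.

End Letters.

End Ascending.

Lemma tight_one_state : exists (S : finType) (L : lang S),
  0 < #|S| /\ reverse_definite L /\ state_complexity L 1 /\ syntactic_complexity L 1.
Proof.
exists unit, (fun _ => false); split; first by rewrite card_unit.
split; first exact: (reverse_definite_of_take (K := 0)).
split.
  by exists (fun _ => ord0); split=> [x y | i]; [split | exists [::]; rewrite ord1].
by exists (fun _ => ord0); split=> [x y _ _ | i]; [split | exists [:: tt]; rewrite ord1].
Qed.

Lemma tight_two_states : exists (S : finType) (L : lang S),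
  0 < #|S| /\ reverse_definite L /\ state_complexity L 2 /\ syntactic_complexity L 1.
Proof.
exists unit, (fun w => w == [::]); split; first by rewrite card_unit.
split; first by apply: (reverse_definite_of_take (K := 1)) => [[]].
split.
  exists (fun w : seq unit => if w is [::] then ord0 else ord_max : 'I_2).
  split=> [x y | [[|[|i]]] // i2]; last first.
  - by exists [:: tt]; apply: val_inj.
  - by exists [::]; apply: val_inj.
  split=> [| /(_ [::])]; last by rewrite !cats0; case: x; case: y.
  by case: x => [|a x]; case: y => [|b y] // /(congr1 val).
exists (fun _ => ord0); split=> [x y | i]; last by exists [:: tt]; rewrite ord1.
by case: x => // a x; case: y => // b y _ _; split=> // _ [].
Qed.

Lemma syntactic_complexity_tight n : 1 <= n ->
  exists (S : finType) (L : lang S),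
    0 < #|S| /\ reverse_definite L /\ state_complexity L n /\
    syntactic_complexity L (n.-1)`!.
Proof.
case: n => [|[|[|m]]] // _; [exact: tight_one_state | exact: tight_two_states |].
pose A := ascending m.
have A_gen p : p \in A ->
    exists2 w : seq {t | t \in A}, w != [::] & forall i, run i w = p i.
  by move=> pA; exists [:: exist _ p pA].
exists {t | t \in A}, (top_lang (A := A)); split; first exact: card_letter_gt0 A_gen.
split; first exact: reverse_definite_top_lang (subxx _).
split; [exact: state_complexity_top_lang (subxx _) A_gen |].
exact: syntactic_complexity_top_lang (subxx _) A_gen.
Qed.

Lemma alphabet_tight n : 4 <= n ->
  exists (S : finType) (L : lang S),
    #|S| = (n.-1)`! - 2 * (n.-2)`! /\ reverse_definite L /\
    state_complexity L n /\ syntactic_complexity L (n.-1)`!.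
Proof.
case: n => [|[|[|[|m]]]] // _.
pose A := ascending m.+1 :\: jumping m.+1.
have A_asc : A \subset ascending m.+1 := subsetDl _ _.
have A_gen p : p \in ascending m.+1 ->
    exists2 w : seq {t | t \in A}, w != [::] & forall i, run i w = p i.
  move=> pA; have [pJ | pJ] := boolP (p \in jumping m.+1); last first.
    have pA' : p \in A by rewrite inE pJ.
    by exists [:: exist _ p pA'].
  exists [:: exist _ (shift_up p) (shift_up_nonjumping (ltn0Sn m) pA);
             exist _ (shift_down p) (shift_down_nonjumping (ltn0Sn m) pJ)] => // i.
  exact: shift_downK.
exists {t | t \in A}, (top_lang (A := A)); split.
  rewrite card_sig (eq_card (B := A)) // cardsD (setIidPr (jumping_sub _)).
  by rewrite card_ascending card_jumping.
split; first exact: reverse_definite_top_lang A_asc.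
split; [exact: state_complexity_top_lang A_asc A_gen |].
exact: syntactic_complexity_top_lang A_asc A_gen.
Qed.

Theorem theorem3 :
  (forall (S : finType) (L : lang S) (n : nat),
      0 < #|S| -> reverse_definite L -> 1 <= n -> state_complexity L n ->
      exists m, syntactic_complexity L m /\ m <= (n.-1)`!) /\
  (forall n : nat, 1 <= n ->
      exists (S : finType) (L : lang S),
        0 < #|S| /\ reverse_definite L /\ state_complexity L n /\
        syntactic_complexity L (n.-1)`!) /\
  (forall (S : finType) (L : lang S) (n : nat),
      0 < #|S| -> reverse_definite L -> 4 <= n -> state_complexity L n ->
      syntactic_complexity L (n.-1)`! ->
      (n.-1)`! - 2 * (n.-2)`! <= #|S|) /\
  (forall n : nat, 4 <= n ->
      exists (S : finType) (L : lang S),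
        #|S| = (n.-1)`! - 2 * (n.-2)`! /\ reverse_definite L /\
        state_complexity L n /\ syntactic_complexity L (n.-1)`!).
Proof.
split; first exact: syntactic_complexity_leq_fact.
split; first exact: syntactic_complexity_tight.
split; first exact: card_alphabet_geq.
exact: alphabet_tight.
Qed.
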